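(* Let $\alpha\in[-1,1]$ and let $F_\alpha(z)=\dfrac{z(1-\alpha z)}{1-z^2}$ for $z\in E$. Then $\Re\big[(1-z^2)F_\alpha'(z)\big]>0$ for all $z\in E$; consequently $F_\alpha$ is univalent in $E$ and maps $E$ onto a domain convex in the direction of the imaginary axis. Moreover, if $f=h+\overline{g}$ is a locally univalent, sense-preserving harmonic mapping in $E$ with $h(0)=g(0)=0$, $h'(0)=1$, $g'(0)=0$ and $h+g=F_\alpha$, then $f\in S_H$ and $f$ maps $E$ onto a domain convex in the direction of the imaginary axis.
   Context: $E=\{z\in\mathbb{C}:|z|<1\}$. A harmonic mapping $f=h+\overline{g}$ on $E$ (with $h,g$ analytic) is locally univalent and sense-preserving iff $h'\neq0$ in $E$ and its dilatation $\omega=g'/h'$ satisfies $|\omega|<1$ in $E$. $S_H$ denotes the class of harmonic, univalent, sense-preserving mappings $f=h+\overline{g}$ of $E$ normalized by $f(0)=0$, $f_z(0)=1$. A domain $\Omega$ is convex in the direction of the imaginary axis if every line parallel to the imaginary axis has connected or empty intersection with $\Omega$. *)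

From Stdlib Require Import Reals.
Open Scope R_scope.

Definition Cx : Type := (R * R)%type.
Definition Re (z : Cx) : R := fst z.
Definition Im (z : Cx) : R := snd z.
Definition RtoC (r : R) : Cx := (r, 0).
Definition Cadd (z w : Cx) : Cx := (fst z + fst w, snd z + snd w).
Definition Copp (z : Cx) : Cx := (- fst z, - snd z).
Definition Csub (z w : Cx) : Cx := Cadd z (Copp w).
Definition Cmul (z w : Cx) : Cx :=
  (fst z * fst w - snd z * snd w, fst z * snd w + snd z * fst w).
Definition Cinv (z : Cx) : Cx :=
  (fst z / (fst z ^ 2 + snd z ^ 2), - snd z / (fst z ^ 2 + snd z ^ 2)).
Definition Cdiv (z w : Cx) : Cx := Cmul z (Cinv w).
Definition Cconj (z : Cx) : Cx := (fst z, - snd z).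
Definition Cmod (z : Cx) : R := sqrt (fst z ^ 2 + snd z ^ 2).
Definition Cx0 : Cx := (0, 0).
Definition Cx1 : Cx := (1, 0).

Definition E (z : Cx) : Prop := Cmod z < 1.

Definition has_cderiv (f : Cx -> Cx) (z l : Cx) : Prop :=
  forall eps : R, 0 < eps -> exists delta : R, 0 < delta /\
    forall w : Cx, 0 < Cmod (Csub w z) < delta ->
      Cmod (Csub (Csub (f w) (f z)) (Cmul l (Csub w z))) <= eps * Cmod (Csub w z).

Definition analytic_E_with_deriv (h h' : Cx -> Cx) : Prop :=
  forall z : Cx, E z -> has_cderiv h z (h' z).

Definition univalent_E (f : Cx -> Cx) : Prop :=
  forall z w : Cx, E z -> E w -> f z = f w -> z = w.

Definition image_E (f : Cx -> Cx) (w : Cx) : Prop := exists z : Cx, E z /\ f z = w.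

(* A set Om is convex in the direction of the imaginary axis: the intersection
   with every vertical line Re w = c is connected or empty, i.e. (being a subset
   of a line) an interval: whenever two points of Om lie on the same vertical
   line, the segment joining them lies in Om. *)
Definition convex_imag_dir (Om : Cx -> Prop) : Prop :=
  forall a b : Cx, Om a -> Om b -> Re a = Re b ->
    forall t : R, 0 <= t <= 1 -> Om (Re a, Im a + t * (Im b - Im a)).

Definition harm (h g : Cx -> Cx) (z : Cx) : Cx := Cadd (h z) (Cconj (g z)).

(* locally univalent and sense-preserving (characterization from the context):
   h' <> 0 in E and |g'/h'| < 1 in E. *)
Definition loc_univ_sense_pres (h' g' : Cx -> Cx) : Prop :=
  forall z : Cx, E z -> h' z <> Cx0 /\ Cmod (Cdiv (g' z) (h' z)) < 1.

Definition in_SH (f : Cx -> Cx) : Prop :=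
  exists h g h' g' : Cx -> Cx,
    analytic_E_with_deriv h h' /\ analytic_E_with_deriv g g' /\
    (forall z, E z -> f z = harm h g z) /\
    loc_univ_sense_pres h' g' /\
    univalent_E f /\
    f Cx0 = Cx0 /\ h' Cx0 = Cx1.

Definition F_alpha (alpha : R) (z : Cx) : Cx :=
  Cdiv (Cmul z (Csub Cx1 (Cmul (RtoC alpha) z))) (Csub Cx1 (Cmul z z)).

(* F(w) - F(z) = (w - z) Q(w,z) / ((1-w^2)(1-z^2))
      with Q(w,z) = 1 - alpha (w + z) + w z.  Since |z - alpha| <= |1 - alpha z|
      on E, Q does not vanish on E x E: F is univalent, F' = Q(z,z)/(1-z^2)^2,
      and Re[(1-z^2) F'(z)] = Re[Q(z,z)/(1-z^2)] > 0.
   2. Image of F.  In the variable u = (1+z)/(1-z) (Re u > 0) F becomes explicit,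
      which shows that F(E) lies in the domain [image_domain alpha]: a half plane
      for alpha = 1 or -1, the plane minus two vertical slits otherwise.
      Conversely every point of this domain is a value of F on E (solve the
      quadratic F(z) = w; a root outside the disk is reflected to its partner
      (alpha z - 1)/(z - alpha) inside).  The domain is convex in the direction
      of the imaginary axis.
   3. Shear construction (Clunie--Sheil-Small).  If h + g = F, then Re f = Re F
      and Im f = Im (h - g).  A vertical segment of F(E) pulls back by F^-1 to a
      Lipschitz path gam in E along which Im (h - g) has derivative
      c Re[(h' - g')/(h' + g')], of the sign of the length c of the segment since
      |g'/h'| < 1.  The mean value theorem gives the univalence of f, the
      intermediate value theorem the convexity of f(E) in the imaginary direction. *)

From Stdlib Require Import Reals Lra Psatz ClassicalEpsilon.
From Coquelicot Require Import Coquelicot.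
Local Open Scope R_scope.

Notation cm := Complex.Cmod.

(* Squared modulus: a polynomial in the coordinates, convenient for nra. *)
Definition nsq (u : C) : R := fst u ^ 2 + snd u ^ 2.

Lemma nsq_ge0 (u : C) : 0 <= nsq u.
Proof. unfold nsq; nra. Qed.

Lemma nsq_pos (u : C) : u <> (0:C) -> 0 < nsq u.
Proof.
  intro Hu. apply Cmod_gt_0 in Hu. unfold Complex.Cmod in Hu.
  destruct (Rle_or_lt (nsq u) 0) as [Hle|Hlt]; auto.
  unfold nsq in Hle. rewrite sqrt_neg_0 in Hu; lra.
Qed.

Lemma cm_lt1 (z : C) : cm z < 1 <-> nsq z < 1.
Proof.
  unfold Complex.Cmod, nsq. split; intro H.
  - destruct (Rlt_or_le (fst z ^ 2 + snd z ^ 2) 1) as [Hlt|Hle]; auto.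
    apply sqrt_le_1_alt in Hle. rewrite sqrt_1 in Hle. lra.
  - rewrite <- sqrt_1. apply sqrt_lt_1_alt. split; [nra|lra].
Qed.

Lemma cm_le_nsq (u v : C) : nsq u <= nsq v -> cm u <= cm v.
Proof. intro H. apply sqrt_le_1_alt; exact H. Qed.

Lemma cm_lt_nsq (u v : C) : nsq u < nsq v -> cm u < cm v.
Proof. intro H. apply sqrt_lt_1_alt. split; [apply nsq_ge0|exact H]. Qed.

Lemma Re_div (p q : C) : fst (p / q)%C = (fst p * fst q + snd p * snd q) / nsq q.
Proof. destruct p as [p1 p2], q as [q1 q2]. unfold nsq; simpl. unfold Rdiv. ring. Qed.

Lemma cm_sub_rev (u v : C) : cm u - cm v <= cm (u - v)%C.
Proof.
  assert (H := Cmod_triangle (u - v)%C v).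
  replace (u - v + v)%C with u in H by ring. lra.
Qed.

Lemma cm_sub_bound (u v : C) : cm (u - v)%C <= cm u + cm v.
Proof. eapply Rle_trans; [apply Cmod_triangle|]. rewrite Cmod_opp. lra. Qed.

Lemma snd_le_cm (u : C) : Rabs (snd u) <= cm u.
Proof. eapply Rle_trans; [|apply Rmax_Cmod]. apply Rmax_r. Qed.

Lemma cm_imag (r : R) : cm (0, r) = Rabs r.
Proof.
  unfold Complex.Cmod; cbn [fst snd].
  replace (0 ^ 2 + r ^ 2) with (r²) by (unfold Rsqr; ring). apply sqrt_Rsqr_abs.
Qed.

Lemma Ceq_sub0 (x y : C) : (x - y = 0)%C -> x = y.
Proof. intro H. transitivity ((x - y) + y)%C; [ring|]. rewrite H. ring. Qed.

Lemma Cne_fst (u : C) : fst u <> 0 -> u <> (0:C).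
Proof. intros H e. rewrite e in H. simpl in H. lra. Qed.

Lemma one_minus_sq_bound (w : C) : 1 - cm w ^ 2 <= cm (1 - w * w)%C.
Proof. assert (H := cm_sub_rev 1 (w * w)%C). rewrite Cmod_1, Cmod_mult in H. lra. Qed.

Lemma one_minus_sq_ne (w : C) : cm w < 1 -> (1 - w * w)%C <> (0:C).
Proof.
  intros Hw He. assert (H := one_minus_sq_bound w). rewrite He, Cmod_0 in H.
  assert (0 <= cm w) by apply Cmod_ge_0. nra.
Qed.

Lemma one_plus_ne (z : C) : cm z < 1 -> (1 + z)%C <> (0:C).
Proof.
  intros Hz e. assert (Hm : z = (- 1)%C) by (transitivity ((1 + z) - 1)%C; [ring|rewrite e; ring]).
  rewrite Hm, Cmod_R, Rabs_left in Hz; lra.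
Qed.

Lemma one_minus_ne (z : C) : cm z < 1 -> (1 - z)%C <> (0:C).
Proof.
  intros Hz e. assert (Hm : z = 1%C) by (transitivity (1 - (1 - z))%C; [ring|rewrite e; ring]).
  rewrite Hm, Cmod_1 in Hz. lra.
Qed.

Lemma cm_one_plus_le (z : C) : cm z < 1 -> cm (1 + z)%C <= 2.
Proof. intro. eapply Rle_trans; [apply Cmod_triangle|]. rewrite Cmod_1. lra. Qed.

Lemma cm_one_minus_le (z : C) : cm z < 1 -> cm (1 - z)%C <= 2.
Proof. intro. eapply Rle_trans; [apply cm_sub_bound|]. rewrite Cmod_1. lra. Qed.

Lemma cm_one_minus_sq_le (z : C) : cm z < 1 -> cm (1 - z * z)%C <= 2.
Proof.
  intro. eapply Rle_trans; [apply cm_sub_bound|]. rewrite Cmod_1, Cmod_mult.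
  assert (0 <= cm z) by apply Cmod_ge_0. nra.
Qed.

(* The identity behind the disk automorphisms z -> (z - a)/(1 - a z):
   |1 - a z|^2 - |z - a|^2 = (1 - a^2)(1 - |z|^2). *)
Lemma moebius_gap (a : R) (z : C) :
  nsq (1 - RtoC a * z)%C - nsq (z - RtoC a)%C = (1 - a ^ 2) * (1 - nsq z).
Proof. destruct z as [x y]. unfold nsq; simpl. ring. Qed.

Lemma moebius_le (a : R) (z : C) : -1 <= a <= 1 -> cm z < 1 ->
  cm (z - RtoC a)%C <= cm (1 - RtoC a * z)%C.
Proof.
  intros Ha Hz. apply cm_le_nsq. apply cm_lt1 in Hz. assert (H := moebius_gap a z).
  assert (0 <= (1 - a ^ 2) * (1 - nsq z)) by (apply Rmult_le_pos; nra). lra.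
Qed.

Lemma moebius_lt (a : R) (z : C) : -1 < a < 1 -> cm z < 1 ->
  cm (z - RtoC a)%C < cm (1 - RtoC a * z)%C.
Proof.
  intros Ha Hz. apply cm_lt_nsq. apply cm_lt1 in Hz. assert (H := moebius_gap a z).
  assert (0 < (1 - a ^ 2) * (1 - nsq z)) by (apply Rmult_lt_0_compat; nra). lra.
Qed.

Lemma Csqrt_ex (d : C) : exists s : C, (s * s)%C = d.
Proof.
  destruct d as [p q].
  set (n := sqrt (p ^ 2 + q ^ 2)).
  assert (Hn2 : n * n = p ^ 2 + q ^ 2) by (apply sqrt_sqrt; nra).
  assert (Hnp : Rabs p <= n).
  { unfold n. rewrite <- sqrt_Rsqr_abs. apply sqrt_le_1_alt. unfold Rsqr; nra. }
  assert (p <= Rabs p) by apply Rle_abs.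
  assert (-p <= Rabs p) by (rewrite <- Rabs_Ropp; apply Rle_abs).
  set (s1 := sqrt ((n + p) / 2)). set (s2 := sqrt ((n - p) / 2)).
  assert (E1 : s1 * s1 = (n + p) / 2) by (apply sqrt_sqrt; lra).
  assert (E2 : s2 * s2 = (n - p) / 2) by (apply sqrt_sqrt; lra).
  assert (E3 : s1 * s2 = Rabs q / 2).
  { unfold s1, s2. rewrite <- sqrt_mult by lra.
    replace ((n + p) / 2 * ((n - p) / 2)) with ((Rabs q / 2) * (Rabs q / 2)).
    - apply sqrt_square. assert (0 <= Rabs q) by apply Rabs_pos. lra.
    - replace ((n + p) / 2 * ((n - p) / 2)) with ((n * n - p ^ 2) / 4) by field.
      rewrite Hn2. replace (Rabs q / 2 * (Rabs q / 2)) with (Rabs q * Rabs q / 4) by field.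
      rewrite <- (Rabs_mult q q), Rabs_right by nra. field. }
  destruct (Rle_or_lt 0 q) as [Hq|Hq].
  - exists (s1, s2). rewrite Rabs_right in E3 by lra.
    apply injective_projections; simpl; nra.
  - exists (s1, - s2). rewrite Rabs_left in E3 by lra.
    apply injective_projections; simpl; nra.
Qed.

Lemma has_cderiv_C (f : C -> C) (z l : C) : has_cderiv f z l <->
  forall eps, 0 < eps -> exists delta, 0 < delta /\ forall w,
    0 < cm (w - z)%C < delta -> cm (f w - f z - l * (w - z))%C <= eps * cm (w - z)%C.
Proof. reflexivity. Qed.

Lemma has_cderiv_of_factor (f D : C -> C) (z l : C) (r K : R) : 0 < r -> 0 <= K ->
  (forall w, cm (w - z)%C < r -> (f w - f z = D w * (w - z))%C) ->
  (forall w, cm (w - z)%C < r -> cm (D w - l)%C <= K * cm (w - z)%C) ->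
  has_cderiv f z l.
Proof.
  intros Hr HK Hf HD. apply has_cderiv_C. intros eps Heps.
  exists (Rmin r (eps / (K + 1))). split.
  { apply Rmin_pos; [lra|]. apply Rdiv_lt_0_compat; lra. }
  intros w [_ Hw].
  assert (Hwr : cm (w - z)%C < r) by (eapply Rlt_le_trans; [exact Hw|apply Rmin_l]).
  assert (Hwe : cm (w - z)%C < eps / (K + 1)) by (eapply Rlt_le_trans; [exact Hw|apply Rmin_r]).
  rewrite Hf by exact Hwr.
  replace (D w * (w - z) - l * (w - z))%C with ((D w - l) * (w - z))%C by ring.
  rewrite Cmod_mult.
  assert (HKw : K * cm (w - z)%C <= eps).
  { apply Rle_trans with ((K + 1) * (eps / (K + 1))); [|right; field; lra].
    apply Rmult_le_compat; [lra|apply Cmod_ge_0|lra|lra]. }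
  apply Rmult_le_compat_r; [apply Cmod_ge_0|]. specialize (HD w Hwr). lra.
Qed.

Lemma has_cderiv_add (f g : C -> C) (z l1 l2 : C) :
  has_cderiv f z l1 -> has_cderiv g z l2 ->
  has_cderiv (fun w => (f w + g w)%C) z (l1 + l2)%C.
Proof.
  rewrite !has_cderiv_C. intros Hf Hg eps He.
  destruct (Hf (eps / 2)) as [d1 [Hd1 H1]]; [lra|].
  destruct (Hg (eps / 2)) as [d2 [Hd2 H2]]; [lra|].
  exists (Rmin d1 d2). split; [apply Rmin_pos; auto|]. intros w Hw.
  assert (B1 := H1 w (conj (proj1 Hw) (Rlt_le_trans _ _ _ (proj2 Hw) (Rmin_l _ _)))).
  assert (B2 := H2 w (conj (proj1 Hw) (Rlt_le_trans _ _ _ (proj2 Hw) (Rmin_r _ _)))).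
  replace (f w + g w - (f z + g z) - (l1 + l2) * (w - z))%C with
    ((f w - f z - l1 * (w - z)) + (g w - g z - l2 * (w - z)))%C by ring.
  eapply Rle_trans; [apply Cmod_triangle|]. lra.
Qed.

Lemma has_cderiv_sub (f g : C -> C) (z l1 l2 : C) :
  has_cderiv f z l1 -> has_cderiv g z l2 ->
  has_cderiv (fun w => (f w - g w)%C) z (l1 - l2)%C.
Proof.
  rewrite !has_cderiv_C. intros Hf Hg eps He.
  destruct (Hf (eps / 2)) as [d1 [Hd1 H1]]; [lra|].
  destruct (Hg (eps / 2)) as [d2 [Hd2 H2]]; [lra|].
  exists (Rmin d1 d2). split; [apply Rmin_pos; auto|]. intros w Hw.
  assert (B1 := H1 w (conj (proj1 Hw) (Rlt_le_trans _ _ _ (proj2 Hw) (Rmin_l _ _)))).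
  assert (B2 := H2 w (conj (proj1 Hw) (Rlt_le_trans _ _ _ (proj2 Hw) (Rmin_r _ _)))).
  replace (f w - g w - (f z - g z) - (l1 - l2) * (w - z))%C with
    ((f w - f z - l1 * (w - z)) - (g w - g z - l2 * (w - z)))%C by ring.
  eapply Rle_trans; [apply cm_sub_bound|]. lra.
Qed.

Lemma has_cderiv_local (f f2 : C -> C) (z l : C) (r : R) : 0 < r -> has_cderiv f z l ->
  (forall w, cm (w - z)%C < r -> f2 w = f w) -> has_cderiv f2 z l.
Proof.
  rewrite !has_cderiv_C. intros Hr Hf Hloc eps He.
  destruct (Hf eps He) as [d [Hd H]].
  exists (Rmin d r). split; [apply Rmin_pos; auto|]. intros w Hw.
  assert (Hw_near : cm (w - z)%C < r) by (eapply Rlt_le_trans; [apply Hw|apply Rmin_r]).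
  assert (Hz_near : cm (z - z)%C < r)
    by (replace (z - z)%C with (0:C) by ring; rewrite Cmod_0; exact Hr).
  rewrite (Hloc w Hw_near), (Hloc z Hz_near).
  apply H. split; [apply Hw|]. eapply Rlt_le_trans; [apply Hw|apply Rmin_l].
Qed.

Lemma has_cderiv_continuous (f : C -> C) (z l : C) : has_cderiv f z l ->
  forall eps, 0 < eps -> exists delta, 0 < delta /\
    forall w, cm (w - z)%C < delta -> cm (f w - f z)%C <= eps.
Proof.
  rewrite has_cderiv_C. intros Hf eps He.
  destruct (Hf 1) as [d [Hd H]]; [lra|].
  set (k := cm l + 1).
  assert (Hk : 0 < k) by (unfold k; assert (H0 := Cmod_ge_0 l); lra).
  exists (Rmin d (eps / k)). split; [apply Rmin_pos; auto; apply Rdiv_lt_0_compat; auto|].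
  intros w Hw.
  destruct (Req_dec (cm (w - z)%C) 0) as [H0|H0].
  - apply Cmod_eq_0, Ceq_sub0 in H0. subst w.
    replace (f z - f z)%C with (0:C) by ring. rewrite Cmod_0. lra.
  - assert (B : cm (f w - f z - l * (w - z))%C <= 1 * cm (w - z)%C).
    { apply H. split; [assert (H1 := Cmod_ge_0 (w - z)%C); lra|].
      eapply Rlt_le_trans; [apply Hw|apply Rmin_l]. }
    assert (Hwk : cm (w - z)%C * k <= eps).
    { assert (Hwe : cm (w - z)%C < eps / k) by (eapply Rlt_le_trans; [apply Hw|apply Rmin_r]).
      apply Rlt_le. apply (Rmult_lt_reg_r (/ k)); [apply Rinv_0_lt_compat; auto|].
      replace (cm (w - z)%C * k * / k) with (cm (w - z)%C) by (field; lra). exact Hwe. }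
    replace (f w - f z)%C with ((f w - f z - l * (w - z)) + l * (w - z))%C by ring.
    eapply Rle_trans; [apply Cmod_triangle|]. rewrite Cmod_mult. unfold k in Hwk. nra.
Qed.

(* Q(w,z) = 1 - a (w + z) + w z, the numerator of the difference quotient of F_alpha. *)
Definition Qf (a : R) (w z : C) : C := (1 - RtoC a * (w + z) + w * z)%C.

Lemma F_eq (a : R) (z : C) : F_alpha a z = (z * (1 - RtoC a * z) / (1 - z * z))%C.
Proof. reflexivity. Qed.

Lemma F_diff (a : R) (w z : C) : (1 - w * w)%C <> (0:C) -> (1 - z * z)%C <> (0:C) ->
  (F_alpha a w - F_alpha a z = (w - z) * (Qf a w z / ((1 - w * w) * (1 - z * z))))%C.
Proof. intros. rewrite !F_eq. unfold Qf. field. auto. Qed.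

Definition Fd (a : R) (z : C) : C := (Qf a z z / ((1 - z * z) * (1 - z * z)))%C.

Lemma F_quotient_lipschitz (a : R) (z : C) : cm z < 1 ->
  exists K, 0 <= K /\ forall w, cm (w - z)%C < (1 - cm z) / 2 ->
    cm (Qf a w z / ((1 - w * w) * (1 - z * z)) - Fd a z)%C <= K * cm (w - z)%C.
Proof.
  intros Hz.
  set (rho := (1 + cm z) / 2).
  set (A := (1 - 2 * RtoC a * z + z * z)%C).
  set (B := (- RtoC a + 2 * z - RtoC a * z * z)%C).
  set (m := (1 - rho ^ 2) * (cm (1 - z * z)%C * cm (1 - z * z)%C)).
  assert (Hz0 := Cmod_ge_0 z).
  assert (Hnz := one_minus_sq_ne z Hz).
  assert (Hm : 0 < m).
  { unfold m. apply Rmult_lt_0_compat; [unfold rho; nra|].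
    apply Rmult_lt_0_compat; apply Cmod_gt_0; auto. }
  exists ((2 * cm A + cm B) / m). split.
  { apply Rdiv_le_0_compat; [|exact Hm].
    assert (H1 := Cmod_ge_0 A); assert (H2 := Cmod_ge_0 B); lra. }
  intros w Hw.
  assert (Hwr : cm w <= rho).
  { assert (H := Cmod_triangle (w - z)%C z).
    replace (w - z + z)%C with w in H by ring. unfold rho; lra. }
  assert (Hnw : (1 - w * w)%C <> (0:C)) by (apply one_minus_sq_ne; unfold rho in Hwr; lra).
  assert (Hid : (Qf a w z / ((1 - w * w) * (1 - z * z)) - Fd a z =
     (w - z) * ((A * w + B) / ((1 - w * w) * ((1 - z * z) * (1 - z * z)))))%C).
  { unfold Fd, Qf, A, B. field. auto. }
  rewrite Hid, Cmod_mult, Cmod_div, !Cmod_mult by (repeat apply Cmult_neq_0; auto).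
  assert (HP : cm (A * w + B)%C <= 2 * cm A + cm B).
  { eapply Rle_trans; [apply Cmod_triangle|]. rewrite Cmod_mult.
    assert (cm w <= 2) by (unfold rho in Hwr; lra). assert (H1 := Cmod_ge_0 A). nra. }
  assert (Hden : m <= cm (1 - w * w)%C * (cm (1 - z * z)%C * cm (1 - z * z)%C)).
  { unfold m. apply Rmult_le_compat_r; [apply Rmult_le_pos; apply Cmod_ge_0|].
    eapply Rle_trans; [|apply one_minus_sq_bound].
    assert (H0 := Cmod_ge_0 w). nra. }
  rewrite Rmult_comm. apply Rmult_le_compat_r; [apply Cmod_ge_0|].
  unfold Rdiv. apply Rmult_le_compat; auto.
  - apply Cmod_ge_0.
  - left; apply Rinv_0_lt_compat. apply Rlt_le_trans with m; auto.
  - apply Rinv_le_contravar; auto.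
Qed.

Lemma F_deriv (a : R) (z : C) : cm z < 1 -> has_cderiv (F_alpha a) z (Fd a z).
Proof.
  intros Hz. destruct (F_quotient_lipschitz a z Hz) as [K [HK HlipK]].
  apply has_cderiv_of_factor with
    (D := fun w => (Qf a w z / ((1 - w * w) * (1 - z * z)))%C) (r := (1 - cm z) / 2) (K := K);
    [lra|exact HK| |exact HlipK].
  intros w Hw. rewrite F_diff, Cmult_comm; [reflexivity| |apply one_minus_sq_ne; exact Hz].
  apply one_minus_sq_ne. assert (H := Cmod_triangle (w - z)%C z).
  replace (w - z + z)%C with w in H by ring. lra.
Qed.

(* First assertion of the theorem: Re[(1 - z^2) F'(z)] > 0.  With z = x + iy,
   Re[Q(z,z) conj(1 - z^2)] = (1 - |z|^2)(1 + |z|^2 - 2 a x). *)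
Lemma F_deriv_re_pos (a : R) (z : C) : -1 <= a <= 1 -> cm z < 1 ->
  0 < fst ((1 - z * z) * Fd a z)%C.
Proof.
  intros Ha Hz.
  assert (Hn := one_minus_sq_ne z Hz).
  replace ((1 - z * z) * Fd a z)%C with (Qf a z z / (1 - z * z))%C by (unfold Fd; field; auto).
  rewrite Re_div. apply Rdiv_lt_0_compat; [|apply nsq_pos; auto].
  apply cm_lt1 in Hz. destruct z as [x y]. unfold Qf, nsq in *; simpl in *.
  assert (E1 : 0 < 1 - (x ^ 2 + y ^ 2)) by lra.
  assert (E2 : 0 < 1 + x ^ 2 + y ^ 2 - 2 * a * x).
  { assert (-1 < x < 1) by nra.
    destruct (Rle_or_lt 0 x).
    - assert (a * x <= x) by nra. assert (0 < (1 - x) ^ 2) by (apply pow_lt; lra). nra.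
    - assert (a * x <= - x) by nra. assert (0 < (1 + x) ^ 2) by (apply pow_lt; lra). nra. }
  eapply Rlt_le_trans; [apply (Rmult_lt_0_compat _ _ E1 E2)|right; ring].
Qed.

(* Q(z,w) = (1 - a w) + z (w - a), hence |Q| >= |1 - a w| - |z| |w - a|. *)
Lemma Qf_lower (a : R) (z w : C) :
  cm (1 - RtoC a * w)%C - cm z * cm (w - RtoC a)%C <= cm (Qf a z w).
Proof.
  replace (Qf a z w) with ((1 - RtoC a * w) - - (z * (w - RtoC a)))%C by (unfold Qf; ring).
  rewrite <- Cmod_mult, <- (Cmod_opp (z * (w - RtoC a))%C). apply cm_sub_rev.
Qed.

Lemma Qf_ne (a : R) (z w : C) : -1 <= a <= 1 -> cm z < 1 -> cm w < 1 -> Qf a z w <> (0:C).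
Proof.
  intros Ha Hz Hw HQ.
  assert (H := Qf_lower a z w). rewrite HQ, Cmod_0 in H.
  assert (Hle := moebius_le a w Ha Hw).
  assert (Hpos : 0 < cm (1 - RtoC a * w)%C).
  { assert (H1 := cm_sub_rev 1 (RtoC a * w)%C). rewrite Cmod_1, Cmod_mult, Cmod_R in H1.
    assert (Rabs a <= 1) by (apply Rabs_le; lra). assert (H2 := Cmod_ge_0 w). nra. }
  assert (Hz0 := Cmod_ge_0 z). assert (H3 := Cmod_ge_0 (w - RtoC a)%C). nra.
Qed.

Lemma F_univalent (a : R) : -1 <= a <= 1 -> forall z w, cm z < 1 -> cm w < 1 ->
  F_alpha a z = F_alpha a w -> z = w.
Proof.
  intros Ha z w Hz Hw Heq.
  assert (Hnz := one_minus_sq_ne z Hz). assert (Hnw := one_minus_sq_ne w Hw).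
  assert (H := F_diff a z w Hnz Hnw).
  rewrite Heq in H. replace (F_alpha a w - F_alpha a w)%C with (0:C) in H by ring.
  destruct (Ceq_dec z w) as [e|n]; [exact e|exfalso].
  apply (Qf_ne a z w Ha Hz Hw).
  assert (Hzw : (z - w)%C <> (0:C)) by (intro e; apply n, Ceq_sub0, e).
  replace (Qf a z w) with ((z - w) * (Qf a z w / ((1 - z * z) * (1 - w * w)))
      * ((1 - z * z) * (1 - w * w)) / (z - w))%C by (field; auto).
  rewrite <- H. field. exact Hzw.
Qed.

Definition image_domain (a : R) (w : C) : Prop :=
  (a = 1 /\ fst w < 1/2) \/ (a = -1 /\ -1/2 < fst w) \/
  (-1 < a < 1 /\ (fst w <> a/2 \/ 4 * snd w ^ 2 < 1 - a ^ 2)).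

(* The domain is convex in the imaginary direction: a vertical line meets it in
   the whole line, in nothing, or (on the slit line) in the gap between the slits. *)
Lemma image_domain_convex (a : R) (p q : C) (t : R) :
  image_domain a p -> image_domain a q -> fst p = fst q -> 0 <= t <= 1 ->
  image_domain a (fst p, snd p + t * (snd q - snd p)).
Proof.
  intros Hp Hq Hf Ht. unfold image_domain in *; simpl.
  destruct Hp as [[? ?]|[[? ?]|[? Hp]]]; [left; auto|right; left; auto|].
  right; right. split; auto.
  destruct Hp as [Hp|Hp]; [left; auto|].
  destruct Hq as [[? ?]|[[? ?]|[? Hq]]]; try lra.
  destruct Hq as [Hq|Hq]; [left; congruence|right].
  (* convexity of y |-> y^2 on the segment *)
  assert (J : (1 - t) * snd p ^ 2 + t * snd q ^ 2 - (snd p + t * (snd q - snd p)) ^ 2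
     = t * (1 - t) * (snd p - snd q) ^ 2) by ring.
  assert (0 <= t * (1 - t) * (snd p - snd q) ^ 2)
    by (apply Rmult_le_pos; [apply Rmult_le_pos; lra|apply pow2_ge_0]).
  destruct (Rle_or_lt t (1/2)).
  - assert ((1 - t) * (4 * snd p ^ 2) < (1 - t) * (1 - a ^ 2)) by (apply Rmult_lt_compat_l; lra).
    assert (t * (4 * snd q ^ 2) <= t * (1 - a ^ 2)) by (apply Rmult_le_compat_l; lra). lra.
  - assert ((1 - t) * (4 * snd p ^ 2) <= (1 - t) * (1 - a ^ 2)) by (apply Rmult_le_compat_l; lra).
    assert (t * (4 * snd q ^ 2) < t * (1 - a ^ 2)) by (apply Rmult_lt_compat_l; lra). lra.
Qed.

Lemma F_cayley (a : R) (z : C) : cm z < 1 ->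
  F_alpha a z = (RtoC a / 2 + ((1 - RtoC a) * ((1 + z) / (1 - z))
                               - (1 + RtoC a) / ((1 + z) / (1 - z))) / 4)%C.
Proof.
  intros Hz. assert (H1 := one_plus_ne z Hz). assert (H2 := one_minus_ne z Hz).
  assert (H3 := one_minus_sq_ne z Hz).
  change (@eq C (F_alpha a z) (RtoC a / 2 + ((1 - RtoC a) * ((1 + z) / (1 - z))
                               - (1 + RtoC a) / ((1 + z) / (1 - z))) / 4)%C).
  rewrite F_eq. field. repeat split; auto.
Qed.

Lemma cayley_parts (a X Y : R) : X ^ 2 + Y ^ 2 <> 0 ->
  let G := (RtoC a / 2 + ((1 - RtoC a) * (X, Y) - (1 + RtoC a) / (X, Y)) / 4)%C in
  fst G = a / 2 + X / 4 * ((1 - a) - (1 + a) / (X ^ 2 + Y ^ 2)) /\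
  snd G = Y / 4 * ((1 - a) + (1 + a) / (X ^ 2 + Y ^ 2)).
Proof. intros HN G. unfold G; simpl. split; field; (split; [nra|]; auto) || nra. Qed.

Lemma cayley_re_pos (z : C) : cm z < 1 -> 0 < fst ((1 + z) / (1 - z))%C.
Proof.
  intros Hz. rewrite Re_div. apply Rdiv_lt_0_compat; [|apply nsq_pos, one_minus_ne; auto].
  apply cm_lt1 in Hz. destruct z as [x y]; unfold nsq in *; simpl in *. nra.
Qed.

Lemma F_maps_into_domain (a : R) (z : C) : -1 <= a <= 1 -> cm z < 1 ->
  image_domain a (F_alpha a z).
Proof.
  intros Ha Hz. rewrite (F_cayley a z Hz).
  assert (HX := cayley_re_pos z Hz).
  destruct ((1 + z) / (1 - z))%C as [X Y]. simpl in HX.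
  assert (HN : 0 < X ^ 2 + Y ^ 2) by nra.
  destruct (cayley_parts a X Y ltac:(lra)) as [G1 G2].
  unfold image_domain. rewrite G1, G2.
  destruct (Req_dec a 1) as [->|H1].
  { left. split; auto. assert (0 < X / 4 * (2 / (X ^ 2 + Y ^ 2))).
    { apply Rmult_lt_0_compat; [lra|apply Rdiv_lt_0_compat; lra]. }
    replace (1 - 1) with 0 by ring. replace (1 + 1) with 2 by ring. lra. }
  destruct (Req_dec a (-1)) as [->|H2].
  { right; left. split; auto. replace (1 - -1) with 2 by ring. replace (1 + -1) with 0 by ring.
    unfold Rdiv. rewrite Rmult_0_l. lra. }
  right; right. split; [lra|].
  destruct (Req_dec (a / 2 + X / 4 * (1 - a - (1 + a) / (X ^ 2 + Y ^ 2))) (a / 2)) as [H|H];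
    [right|left; auto].
  (* on the line Re w = alpha/2 one has (1 - a)|u|^2 = 1 + a *)
  assert (Hs : (1 + a) / (X ^ 2 + Y ^ 2) = 1 - a).
  { assert (H0 : X / 4 * (1 - a - (1 + a) / (X ^ 2 + Y ^ 2)) = 0) by lra.
    apply Rmult_integral in H0. destruct H0 as [H0|H0]; lra. }
  rewrite Hs.
  replace (4 * (Y / 4 * (1 - a + (1 - a))) ^ 2) with (Y ^ 2 * (1 - a) ^ 2) by field.
  assert (Hlt : Y ^ 2 * (1 - a) ^ 2 < (X ^ 2 + Y ^ 2) * (1 - a) ^ 2)
    by (apply Rmult_lt_compat_r; nra).
  replace (1 - a ^ 2) with ((X ^ 2 + Y ^ 2) * (1 - a) ^ 2).
  - exact Hlt.
  - replace (1 - a ^ 2) with ((1 + a) * (1 - a)) by ring. rewrite <- Hs. field. lra.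
Qed.

(* A preimage of w in the half plane: for alpha = 1, F(z) = z/(1+z) has inverse
   w/(1-w), which lies in E exactly when Re w < 1/2. *)
Lemma F_one_onto (w : C) : fst w < 1/2 -> exists z, cm z < 1 /\ F_alpha 1 z = w.
Proof.
  intros Hw.
  assert (Hn : (1 - w)%C <> (0:C)) by (apply Cne_fst; simpl; lra).
  assert (Hlt : cm w < cm (1 - w)%C)
    by (apply cm_lt_nsq; destruct w as [p q]; unfold nsq; simpl in *; nra).
  set (z := (w / (1 - w))%C).
  assert (Hz : cm z < 1).
  { unfold z. rewrite Cmod_div by exact Hn. assert (0 < cm (1 - w)%C) by (apply Cmod_gt_0; auto).
    apply (Rmult_lt_reg_r (cm (1 - w)%C)); auto. field_simplify; lra. }
  exists z. split; [exact Hz|].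
  assert (H1 := one_plus_ne z Hz). assert (H2 := one_minus_ne z Hz).
  assert (H3 := one_minus_sq_ne z Hz).
  change (@eq C (F_alpha 1 z) w). rewrite F_eq. change (RtoC 1) with (1:C).
  unfold z in *. field. split; auto. replace (1 - w + w)%C with (1:C) by ring.
  apply Cne_fst; simpl; lra.
Qed.

(* For alpha = -1, F(z) = z/(1-z) has inverse w/(1+w). *)
Lemma F_mone_onto (w : C) : -1/2 < fst w -> exists z, cm z < 1 /\ F_alpha (-1) z = w.
Proof.
  intros Hw.
  assert (Hn : (1 + w)%C <> (0:C)) by (apply Cne_fst; simpl; lra).
  assert (Hlt : cm w < cm (1 + w)%C)
    by (apply cm_lt_nsq; destruct w as [p q]; unfold nsq; simpl in *; nra).
  set (z := (w / (1 + w))%C).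
  assert (Hz : cm z < 1).
  { unfold z. rewrite Cmod_div by exact Hn. assert (0 < cm (1 + w)%C) by (apply Cmod_gt_0; auto).
    apply (Rmult_lt_reg_r (cm (1 + w)%C)); auto. field_simplify; lra. }
  exists z. split; [exact Hz|].
  assert (H1 := one_plus_ne z Hz). assert (H2 := one_minus_ne z Hz).
  assert (H3 := one_minus_sq_ne z Hz).
  change (@eq C (F_alpha (-1) z) w). rewrite F_eq.
  replace (RtoC (-1)) with (- (1:C))%C by (apply injective_projections; simpl; ring).
  unfold z in *. field. split; auto. replace (1 + w - w)%C with (1:C) by ring.
  apply Cne_fst; simpl; lra.
Qed.

(* Solving the quadratic z (1 - a z) = w (1 - z^2): z = 2w / (1 + S) with
   S^2 = 1 + 4 w (w - a). *)
Lemma F_equation_root (a : R) (w : C) :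
  exists z, (z * (1 - RtoC a * z) = w * (1 - z * z))%C.
Proof.
  set (d := (1 + 4 * w * (w - RtoC a))%C).
  destruct (Csqrt_ex d) as [S0 HS0].
  assert (HS : exists S, (S * S)%C = d /\ (1 + S)%C <> (0:C)).
  { destruct (Ceq_dec (1 + S0)%C 0) as [e|n]; [|exists S0; auto].
    exists (- S0)%C. split; [rewrite <- HS0; ring|].
    assert (HS0m : S0 = (-1)%C) by (transitivity ((1 + S0) - 1)%C; [ring|rewrite e; ring]).
    rewrite HS0m. apply Cne_fst; simpl; lra. }
  destruct HS as [S [HS HS1]].
  exists (2 * w / (1 + S))%C.
  apply Ceq_sub0.
  transitivity (w * (d - S * S) / ((1 + S) * (1 + S)))%C.
  - unfold d. field. exact HS1.
  - rewrite HS. field. exact HS1.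
Qed.

Lemma F_equation_root_not_unimodular (a : R) (w z : C) : -1 < a < 1 ->
  (fst w <> a/2 \/ 4 * snd w ^ 2 < 1 - a ^ 2) ->
  (z * (1 - RtoC a * z) = w * (1 - z * z))%C -> nsq z <> 1.
Proof.
  intros Ha Hw Hroot Hunit.
  (* multiply the equation by conj z and use z conj z = 1 *)
  assert (Hzz : (z * Complex.Cconj z)%C = (1:C)).
  { destruct z as [x y]. unfold nsq in Hunit; simpl in Hunit.
    apply injective_projections; simpl; nra. }
  assert (K : (z * Complex.Cconj z - RtoC a * z * (z * Complex.Cconj z)
               - (w * Complex.Cconj z - w * z * (z * Complex.Cconj z)) = 0)%C).
  { transitivity ((z * (1 - RtoC a * z) - w * (1 - z * z)) * Complex.Cconj z)%C; [ring|].
    rewrite Hroot. ring. }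
  rewrite Hzz in K.
  destruct z as [x y], w as [p q]. unfold nsq in Hunit; simpl in *.
  assert (K1 := f_equal fst K). assert (K2 := f_equal snd K). simpl in K1, K2.
  assert (h1 : 1 - a * x - 2 * q * y = 0) by nra.
  assert (h2 : y * (2 * p - a) = 0) by nra.
  destruct (Req_dec y 0) as [Hy|Hy].
  - subst y. assert (Hx2 : x ^ 2 = 1) by nra. assert (Hax : a * x = 1) by nra.
    assert ((a * x) ^ 2 = 1) by (rewrite Hax; ring). nra.
  - assert (Hp : p = a / 2).
    { apply Rmult_integral in h2. destruct h2 as [h|h]; [contradiction|lra]. }
    assert (Hy2 : 0 < y ^ 2) by (apply pow2_gt_0 in Hy; auto; nra).
    assert (Hid : (1 - a * x) ^ 2 - (1 - a ^ 2) * y ^ 2 = (x - a) ^ 2) by nra.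
    assert (Hq : 4 * q ^ 2 * y ^ 2 = (1 - a * x) ^ 2) by nra.
    assert (1 - a ^ 2 <= 4 * q ^ 2).
    { apply (Rmult_le_reg_r (y ^ 2)); [exact Hy2|].
      assert (0 <= (x - a) ^ 2) by apply pow2_ge_0. lra. }
    destruct Hw as [Hw|Hw]; lra.
Qed.

(* A root z0 outside the closed disk has a partner (a z0 - 1)/(z0 - a) inside it
   with the same value of F: it solves Q(z1, z0) = 0. *)
Lemma F_equation_root_reflect (a : R) (w z0 : C) : -1 < a < 1 -> 1 < nsq z0 ->
  (z0 * (1 - RtoC a * z0) = w * (1 - z0 * z0))%C ->
  exists z, cm z < 1 /\ F_alpha a z = w.
Proof.
  intros Ha Hout Hroot.
  assert (Hz0a : (z0 - RtoC a)%C <> (0:C)).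
  { intro e. apply Ceq_sub0 in e. rewrite e in Hout. unfold nsq in Hout; simpl in Hout. nra. }
  assert (Hz0n : (1 - z0 * z0)%C <> (0:C)).
  { intro e. assert (E1 : (z0 * z0)%C = 1%C) by (symmetry; apply Ceq_sub0; exact e).
    destruct z0 as [x y]. unfold nsq in Hout; simpl in Hout.
    assert (K1 := f_equal fst E1). assert (K2 := f_equal snd E1). simpl in K1, K2. nra. }
  set (z1 := ((RtoC a * z0 - 1) / (z0 - RtoC a))%C).
  assert (Hz1 : cm z1 < 1).
  { unfold z1. rewrite Cmod_div by exact Hz0a.
    assert (0 < cm (z0 - RtoC a)%C) by (apply Cmod_gt_0; auto).
    assert (cm (RtoC a * z0 - 1)%C < cm (z0 - RtoC a)%C).
    { apply cm_lt_nsq. assert (H1 := moebius_gap a z0).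
      assert (nsq (RtoC a * z0 - 1)%C = nsq (1 - RtoC a * z0)%C)
        by (destruct z0; unfold nsq; simpl; ring).
      assert ((1 - a ^ 2) * (1 - nsq z0) < 0) by (assert (0 < 1 - a ^ 2) by nra; nra). lra. }
    apply (Rmult_lt_reg_r (cm (z0 - RtoC a)%C)); auto. field_simplify; lra. }
  exists z1. split; [exact Hz1|].
  assert (Fz0 : F_alpha a z0 = w).
  { change (@eq C (F_alpha a z0) w). rewrite F_eq, Hroot. field. exact Hz0n. }
  rewrite <- Fz0. apply Ceq_sub0.
  rewrite (F_diff a z1 z0 (one_minus_sq_ne z1 Hz1) Hz0n).
  replace (Qf a z1 z0) with (0:C) by (unfold Qf, z1; field; exact Hz0a).
  field. split; [exact Hz0n|apply one_minus_sq_ne; exact Hz1].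
Qed.

Lemma F_onto_domain (a : R) (w : C) : -1 <= a <= 1 -> image_domain a w ->
  exists z, cm z < 1 /\ F_alpha a z = w.
Proof.
  intros Ha [[-> Hw]|[[-> Hw]|[Ha' Hw]]].
  - exact (F_one_onto w Hw).
  - exact (F_mone_onto w Hw).
  - destruct (F_equation_root a w) as [z0 Hroot].
    assert (Hne := F_equation_root_not_unimodular a w z0 Ha' Hw Hroot).
    destruct (Rlt_or_le (nsq z0) 1) as [Hin|Hle].
    + assert (Hz : cm z0 < 1) by (apply cm_lt1; exact Hin).
      exists z0. split; [exact Hz|]. change (@eq C (F_alpha a z0) w).
      rewrite F_eq, Hroot. field. apply one_minus_sq_ne; exact Hz.
    + apply (F_equation_root_reflect a w z0 Ha'); [lra|exact Hroot].
Qed.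

Lemma F_image_convex (a : R) : -1 <= a <= 1 -> forall p q : C,
  image_E (F_alpha a) p -> image_E (F_alpha a) q -> fst p = fst q -> forall t, 0 <= t <= 1 ->
  image_E (F_alpha a) (fst p, snd p + t * (snd q - snd p)).
Proof.
  intros Ha p q [z1 [Hz1 Hp]] [z2 [Hz2 Hq]] Hf t Ht.
  assert (Dp : image_domain a p) by (rewrite <- Hp; apply F_maps_into_domain; auto).
  assert (Dq : image_domain a q) by (rewrite <- Hq; apply F_maps_into_domain; auto).
  destruct (F_onto_domain a _ Ha (image_domain_convex a p q t Dp Dq Hf Ht)) as [z [Hz Hzw]].
  exists z. split; auto.
Qed.

(* For alpha = 1
   (resp. -1) Q factors as (1 - zs)(1 - zt) (resp. (1 + zs)(1 + zt)); otherwise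
   |Q(zs, zt)| >= |1 - a zt| - |zt - a| > 0. *)
Lemma Qf_dominates (a : R) (zt : C) : -1 <= a <= 1 -> cm zt < 1 ->
  exists K, 0 < K /\ forall zs, cm zs < 1 ->
    cm ((1 - zs * zs) * (1 - zt * zt))%C <= K * cm (Qf a zs zt).
Proof.
  intros Ha Ht.
  destruct (Req_dec a 1) as [->|H1].
  { exists 4. split; [lra|]. intros zs Hs.
    replace ((1 - zs * zs) * (1 - zt * zt))%C with (Qf 1 zs zt * ((1 + zs) * (1 + zt)))%C
      by (unfold Qf; change (RtoC 1) with (1:C); ring).
    rewrite !Cmod_mult.
    assert (A1 := cm_one_plus_le zs Hs). assert (A2 := cm_one_plus_le zt Ht).
    assert (B0 := Cmod_ge_0 (Qf 1 zs zt)).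
    assert (B1 := Cmod_ge_0 (1 + zs)%C). assert (B2 := Cmod_ge_0 (1 + zt)%C).
    assert (cm (1 + zs)%C * cm (1 + zt)%C <= 4) by nra. nra. }
  destruct (Req_dec a (-1)) as [->|H2].
  { exists 4. split; [lra|]. intros zs Hs.
    replace ((1 - zs * zs) * (1 - zt * zt))%C with (Qf (-1) zs zt * ((1 - zs) * (1 - zt)))%C
      by (unfold Qf; replace (RtoC (-1)) with (- (1:C))%C
            by (apply injective_projections; simpl; ring); ring).
    rewrite !Cmod_mult.
    assert (A1 := cm_one_minus_le zs Hs). assert (A2 := cm_one_minus_le zt Ht).
    assert (B0 := Cmod_ge_0 (Qf (-1) zs zt)).
    assert (B1 := Cmod_ge_0 (1 - zs)%C). assert (B2 := Cmod_ge_0 (1 - zt)%C).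
    assert (cm (1 - zs)%C * cm (1 - zt)%C <= 4) by nra. nra. }
  set (m := cm (1 - RtoC a * zt)%C - cm (zt - RtoC a)%C).
  assert (Hm : 0 < m) by (unfold m; assert (H := moebius_lt a zt ltac:(lra) Ht); lra).
  exists (4 / m). split; [apply Rdiv_lt_0_compat; lra|]. intros zs Hs.
  assert (HQm : m <= cm (Qf a zs zt)).
  { eapply Rle_trans; [|apply Qf_lower]. unfold m.
    assert (H0 := Cmod_ge_0 (zt - RtoC a)%C). assert (H3 := Cmod_ge_0 zs). nra. }
  rewrite Cmod_mult.
  assert (A1 := cm_one_minus_sq_le zs Hs). assert (A2 := cm_one_minus_sq_le zt Ht).
  assert (B1 := Cmod_ge_0 (1 - zs * zs)%C). assert (B2 := Cmod_ge_0 (1 - zt * zt)%C).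
  apply Rle_trans with 4; [nra|].
  apply (Rmult_le_reg_r m); [exact Hm|].
  replace (4 / m * cm (Qf a zs zt) * m) with (4 * cm (Qf a zs zt)) by (field; lra). nra.
Qed.

Lemma F_inverse_lipschitz (a : R) (zt : C) : -1 <= a <= 1 -> cm zt < 1 ->
  exists K, 0 < K /\ forall zs, cm zs < 1 ->
    cm (zs - zt)%C <= K * cm (F_alpha a zs - F_alpha a zt)%C.
Proof.
  intros Ha Ht. destruct (Qf_dominates a zt Ha Ht) as [K [HK Hdom]].
  exists K. split; [exact HK|]. intros zs Hs.
  assert (Hns := one_minus_sq_ne zs Hs). assert (Hnt := one_minus_sq_ne zt Ht).
  assert (HQ := Qf_ne a zs zt Ha Hs Ht).
  rewrite F_diff by assumption. rewrite Cmod_mult, Cmod_div by (apply Cmult_neq_0; auto).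
  assert (Hd : 0 < cm ((1 - zs * zs) * (1 - zt * zt))%C)
    by (apply Cmod_gt_0, Cmult_neq_0; auto).
  assert (HQp : 0 < cm (Qf a zs zt)) by (apply Cmod_gt_0; exact HQ).
  assert (Hr : 1 <= K * (cm (Qf a zs zt) / cm ((1 - zs * zs) * (1 - zt * zt))%C)).
  { specialize (Hdom zs Hs). apply (Rmult_le_reg_r (cm ((1 - zs * zs) * (1 - zt * zt))%C)); auto.
    replace (K * (cm (Qf a zs zt) / cm ((1 - zs * zs) * (1 - zt * zt))%C)
      * cm ((1 - zs * zs) * (1 - zt * zt))%C) with (K * cm (Qf a zs zt)) by (field; lra). lra. }
  assert (H0 := Cmod_ge_0 (zs - zt)%C). nra.
Qed.

(* Clamping of the parameter to [0,1], so that paths are defined on all of R. *)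
Definition clamp01 (s : R) : R := Rmax 0 (Rmin 1 s).

Lemma clamp01_range (s : R) : 0 <= clamp01 s <= 1.
Proof. unfold clamp01, Rmax, Rmin. repeat destruct Rle_dec; lra. Qed.

Lemma clamp01_id (s : R) : 0 <= s <= 1 -> clamp01 s = s.
Proof. intros. unfold clamp01, Rmax, Rmin. repeat destruct Rle_dec; lra. Qed.

Lemma clamp01_lipschitz (s t : R) : Rabs (clamp01 s - clamp01 t) <= Rabs (s - t).
Proof.
  unfold clamp01, Rmax, Rmin, Rabs. repeat destruct Rle_dec; repeat destruct Rcase_abs; lra.
Qed.

Lemma vertical_path_exists (a : R) (z1 z2 : C) : -1 <= a <= 1 -> cm z1 < 1 -> cm z2 < 1 ->
  fst (F_alpha a z1) = fst (F_alpha a z2) ->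
  exists gam : R -> C, (forall s, cm (gam s) < 1) /\
    (forall s, F_alpha a (gam s) = (fst (F_alpha a z1),
        snd (F_alpha a z1) + clamp01 s * (snd (F_alpha a z2) - snd (F_alpha a z1)))) /\
    gam 0 = z1 /\ gam 1 = z2.
Proof.
  intros Ha Hz1 Hz2 Hf.
  set (seg := fun s => (fst (F_alpha a z1),
        snd (F_alpha a z1) + clamp01 s * (snd (F_alpha a z2) - snd (F_alpha a z1))) : C).
  assert (Hex : forall s, exists z, cm z < 1 /\ F_alpha a z = seg s).
  { intro s. apply (F_image_convex a Ha); [exists z1; auto|exists z2; auto|exact Hf|].
    apply clamp01_range. }
  destruct (choice _ Hex) as [gam Hgam].
  exists gam. split; [intro s; apply Hgam|]. split; [intro s; apply Hgam|].
  split; apply (F_univalent a Ha); try apply Hgam; auto; rewrite (proj2 (Hgam _)); unfold seg.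
  - rewrite clamp01_id by lra. apply injective_projections; simpl; ring.
  - rewrite clamp01_id by lra. rewrite Hf. apply injective_projections; simpl; ring.
Qed.

Lemma is_derive_of_estimate (p : R -> R) (s D : R) :
  (forall eps, 0 < eps -> exists delta, 0 < delta /\ forall s', Rabs (s' - s) < delta ->
     Rabs (p s' - p s - D * (s' - s)) <= eps * Rabs (s' - s)) ->
  is_derive p s D.
Proof.
  intros Hest. apply is_derive_Reals. intros eps He.
  destruct (Hest (eps / 2)) as [d [Hd Hb]]; [lra|].
  exists (mkposreal d Hd). intros k Hk0 Hkd. simpl in Hkd.
  specialize (Hb (s + k)). replace (s + k - s) with k in Hb by ring. specialize (Hb Hkd).
  assert (Hk : 0 < Rabs k) by (apply Rabs_pos_lt; exact Hk0).
  replace ((p (s + k) - p s) / k - D) with ((p (s + k) - p s - D * k) / k) by (field; exact Hk0).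
  unfold Rdiv. rewrite Rabs_mult, Rabs_inv.
  apply (Rmult_lt_reg_r (Rabs k)); [exact Hk|].
  replace (Rabs (p (s + k) - p s - D * k) * / Rabs k * Rabs k)
    with (Rabs (p (s + k) - p s - D * k)) by (field; lra).
  nra.
Qed.

Lemma increment_ratio_estimate (Fm phi : C -> C) (z L M : C) :
  has_cderiv Fm z L -> L <> (0:C) -> has_cderiv phi z M ->
  forall eps, 0 < eps -> exists delta, 0 < delta /\ forall w, cm (w - z)%C < delta ->
    cm (phi w - phi z - (M / L) * (Fm w - Fm z))%C <= eps * cm (w - z)%C.
Proof.
  rewrite !has_cderiv_C. intros HF HL Hphi eps He.
  set (A := cm M / cm L).
  assert (HLp : 0 < cm L) by (apply Cmod_gt_0; auto).
  assert (HA : 0 <= A) by (unfold A; apply Rdiv_le_0_compat; [apply Cmod_ge_0|auto]).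
  set (eta := eps / (A + 1)).
  assert (Heta : 0 < eta) by (unfold eta; apply Rdiv_lt_0_compat; lra).
  destruct (HF eta Heta) as [d1 [Hd1 H1]].
  destruct (Hphi eta Heta) as [d2 [Hd2 H2]].
  exists (Rmin d1 d2). split; [apply Rmin_pos; auto|]. intros w Hw.
  destruct (Req_dec (cm (w - z)%C) 0) as [H0|H0].
  - apply Cmod_eq_0, Ceq_sub0 in H0. subst w.
    replace (phi z - phi z - M / L * (Fm z - Fm z))%C with (0:C) by (field; auto).
    rewrite Cmod_0. apply Rmult_le_pos; [lra|apply Cmod_ge_0].
  - assert (Hpos : 0 < cm (w - z)%C) by (assert (H3 := Cmod_ge_0 (w - z)%C); lra).
    assert (B1 := H1 w (conj Hpos (Rlt_le_trans _ _ _ Hw (Rmin_l _ _)))).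
    assert (B2 := H2 w (conj Hpos (Rlt_le_trans _ _ _ Hw (Rmin_r _ _)))).
    replace (phi w - phi z - M / L * (Fm w - Fm z))%C with
      ((phi w - phi z - M * (w - z)) - (M / L) * (Fm w - Fm z - L * (w - z)))%C
      by (field; auto).
    eapply Rle_trans; [apply cm_sub_bound|].
    rewrite Cmod_mult, Cmod_div by auto. fold A.
    assert (A * cm (Fm w - Fm z - L * (w - z))%C <= A * (eta * cm (w - z)%C))
      by (apply Rmult_le_compat_l; auto).
    assert (Hk : eta * (A + 1) = eps) by (unfold eta; field; lra).
    nra.
Qed.

Lemma im_chain_rule (Fm phi : C -> C) (gam : R -> C) (s c K0 rho : R) (L M : C) :
  has_cderiv Fm (gam s) L -> L <> (0:C) -> has_cderiv phi (gam s) M -> 0 <= K0 -> 0 < rho ->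
  (forall s', cm (gam s' - gam s)%C <= K0 * Rabs (s' - s)) ->
  (forall s', Rabs (s' - s) < rho -> (Fm (gam s') - Fm (gam s))%C = (0, c * (s' - s))) ->
  is_derive (fun s' => snd (phi (gam s'))) s (c * fst (M / L)%C).
Proof.
  intros HF HL Hphi HK Hrho Hlip Hvert.
  apply is_derive_of_estimate. intros eps He.
  destruct (increment_ratio_estimate Fm phi (gam s) L M HF HL Hphi (eps / (K0 + 1)))
    as [d [Hd Hest]]; [apply Rdiv_lt_0_compat; lra|].
  exists (Rmin rho (d / (K0 + 1))). split; [apply Rmin_pos; auto; apply Rdiv_lt_0_compat; lra|].
  intros s' Hs'.
  assert (Hs1 : Rabs (s' - s) < rho) by (eapply Rlt_le_trans; [apply Hs'|apply Rmin_l]).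
  assert (Hs2 : Rabs (s' - s) < d / (K0 + 1)) by (eapply Rlt_le_trans; [apply Hs'|apply Rmin_r]).
  assert (Habs := Rabs_pos (s' - s)).
  assert (HDl := Hlip s').
  assert (Hnear : cm (gam s' - gam s)%C < d).
  { apply Rle_lt_trans with ((K0 + 1) * Rabs (s' - s)); [nra|].
    apply (Rmult_lt_reg_r (/ (K0 + 1))); [apply Rinv_0_lt_compat; lra|].
    replace ((K0 + 1) * Rabs (s' - s) * / (K0 + 1)) with (Rabs (s' - s)) by (field; lra).
    exact Hs2. }
  specialize (Hest (gam s') Hnear). rewrite (Hvert s' Hs1) in Hest.
  replace (snd (phi (gam s')) - snd (phi (gam s)) - c * fst (M / L)%C * (s' - s))
    with (snd (phi (gam s') - phi (gam s) - (M / L) * (0%R, (c * (s' - s))%R))%C)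
    by (destruct (phi (gam s')), (phi (gam s)), (M / L)%C; simpl; ring).
  eapply Rle_trans; [apply snd_le_cm|]. eapply Rle_trans; [exact Hest|].
  apply Rle_trans with (eps / (K0 + 1) * ((K0 + 1) * Rabs (s' - s))).
  - apply Rmult_le_compat_l; [apply Rlt_le, Rdiv_lt_0_compat; lra|nra].
  - right. field. lra.
Qed.

Lemma dilatation_re_pos (hp gp : C) : hp <> (0:C) -> cm (gp / hp)%C < 1 ->
  (hp + gp)%C <> (0:C) /\ 0 < fst ((hp - gp) / (hp + gp))%C.
Proof.
  intros Hh Hw.
  set (om := (gp / hp)%C) in *.
  assert (Hg : gp = (om * hp)%C) by (unfold om; field; exact Hh).
  assert (H1 : (1 + om)%C <> (0:C)) by (apply one_plus_ne; auto).
  assert (Hs : (hp + om * hp)%C <> (0:C)).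
  { replace (hp + om * hp)%C with (hp * (1 + om))%C by ring. apply Cmult_neq_0; auto. }
  rewrite Hg. split; [exact Hs|].
  replace ((hp - om * hp) / (hp + om * hp))%C with ((1 - om) / (1 + om))%C
    by (field; auto).
  rewrite Re_div. apply Rdiv_lt_0_compat; [|apply nsq_pos; auto].
  apply cm_lt1 in Hw. destruct om as [u v]; unfold nsq in *; simpl in *. nra.
Qed.

(* Im f along a path gam, for the harmonic map f = h + conj g: Im (h - g). *)
Definition im_along (h g : C -> C) (gam : R -> C) (s : R) : R := snd (h (gam s) - g (gam s))%C.

Lemma harm_snd (h g : C -> C) (z : C) : snd (harm h g z) = snd (h z) - snd (g z).
Proof. unfold harm, Cadd, Cconj; simpl. ring. Qed.

Section Shear.

Variables (a : R) (h g h' g' : C -> C).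
Hypothesis Ha : -1 <= a <= 1.
Hypothesis Hh : analytic_E_with_deriv h h'.
Hypothesis Hg : analytic_E_with_deriv g g'.
Hypothesis Hlu : loc_univ_sense_pres h' g'.
Hypothesis Hsum : forall z : Cx, E z -> Cadd (h z) (g z) = F_alpha a z.

Lemma harm_fst_F (z : C) : cm z < 1 -> fst (harm h g z) = fst (F_alpha a z).
Proof. intro Hz. rewrite <- (Hsum z Hz). reflexivity. Qed.

Lemma F_deriv_sum (z : C) : cm z < 1 -> has_cderiv (F_alpha a) z (h' z + g' z)%C.
Proof.
  intros Hz. apply has_cderiv_local with (f := fun w => (h w + g w)%C) (r := 1 - cm z).
  - lra.
  - apply has_cderiv_add; [apply Hh|apply Hg]; exact Hz.
  - intros w Hw. symmetry. apply Hsum. red. assert (H := Cmod_triangle (w - z)%C z).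
    replace (w - z + z)%C with w in H by ring. change (cm w < 1). lra.
Qed.

Section VerticalPath.

Variables (gam : R -> C) (x0 y0 c : R).
Hypothesis gam_in_E : forall s, cm (gam s) < 1.
Hypothesis gam_vertical : forall s, F_alpha a (gam s) = (x0, y0 + clamp01 s * c).

(* The path is Lipschitz at every parameter, since F^-1 is. *)
Lemma gam_lipschitz (t : R) :
  exists K0, 0 <= K0 /\ forall s, cm (gam s - gam t)%C <= K0 * Rabs (s - t).
Proof.
  destruct (F_inverse_lipschitz a (gam t) Ha (gam_in_E t)) as [K [HK HKb]].
  exists (K * Rabs c). split; [apply Rmult_le_pos; [lra|apply Rabs_pos]|]. intro s.
  eapply Rle_trans; [apply HKb, gam_in_E|].
  rewrite !gam_vertical.
  replace (Cminus (x0, y0 + clamp01 s * c) (x0, y0 + clamp01 t * c))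
    with ((0, (clamp01 s - clamp01 t) * c) : C) by (apply injective_projections; simpl; ring).
  rewrite cm_imag, Rabs_mult, Rmult_assoc. apply Rmult_le_compat_l; [lra|].
  rewrite Rmult_comm. apply Rmult_le_compat_l; [apply Rabs_pos|apply clamp01_lipschitz].
Qed.

Lemma im_along_continuous : continuity (im_along h g gam).
Proof.
  intros t eps He.
  assert (Hd := has_cderiv_sub h g (gam t) _ _ (Hh _ (gam_in_E t)) (Hg _ (gam_in_E t))).
  destruct (has_cderiv_continuous _ _ _ Hd (eps / 2)) as [d [Hdpos Hb]]; [lra|].
  destruct (gam_lipschitz t) as [K0 [HK0 HK0b]].
  exists (d / (K0 + 1)). split; [apply Rdiv_lt_0_compat; lra|].
  intros s [_ Hs]. change (Rabs (s - t) < d / (K0 + 1)) in Hs.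
  change (Rabs (im_along h g gam s - im_along h g gam t) < eps). unfold im_along.
  assert (Hnear : cm (gam s - gam t)%C < d).
  { eapply Rle_lt_trans; [apply HK0b|]. assert (H0 := Rabs_pos (s - t)).
    apply Rle_lt_trans with ((K0 + 1) * Rabs (s - t)); [nra|].
    apply (Rmult_lt_reg_r (/ (K0 + 1))); [apply Rinv_0_lt_compat; lra|].
    replace ((K0 + 1) * Rabs (s - t) * / (K0 + 1)) with (Rabs (s - t)) by (field; lra).
    exact Hs. }
  specialize (Hb (gam s) Hnear).
  replace (snd (h (gam s) - g (gam s))%C - snd (h (gam t) - g (gam t))%C)
    with (snd ((h (gam s) - g (gam s)) - (h (gam t) - g (gam t)))%C) by (simpl; ring).
  eapply Rle_lt_trans; [apply snd_le_cm|]. lra.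
Qed.

Lemma im_along_derive (s : R) : 0 < s < 1 ->
  is_derive (im_along h g gam) s
    (c * fst ((h' (gam s) - g' (gam s)) / (h' (gam s) + g' (gam s)))%C).
Proof.
  intros Hs.
  destruct (gam_lipschitz s) as [K0 [HK0 HK0b]].
  destruct (Hlu (gam s) (gam_in_E s)) as [Hh'0 Hom].
  destruct (dilatation_re_pos _ _ Hh'0 Hom) as [HL _].
  apply (im_chain_rule (F_alpha a) (fun w => h w - g w)%C gam s c K0 (Rmin s (1 - s))).
  - apply F_deriv_sum, gam_in_E.
  - exact HL.
  - apply has_cderiv_sub; [apply Hh|apply Hg]; apply gam_in_E.
  - exact HK0.
  - apply Rmin_pos; lra.
  - exact HK0b.
  - intros s' Hs'. rewrite !gam_vertical.
    assert (Hs'1 : 0 <= s' <= 1).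
    { assert (Rabs (s' - s) < s) by (eapply Rlt_le_trans; [apply Hs'|apply Rmin_l]).
      assert (Rabs (s' - s) < 1 - s) by (eapply Rlt_le_trans; [apply Hs'|apply Rmin_r]).
      unfold Rabs in *. destruct Rcase_abs; lra. }
    rewrite !clamp01_id by lra. apply injective_projections; simpl; ring.
Qed.

(* By the mean value theorem and Re[(h' - g')/(h' + g')] > 0, equal values of
   Im f at the ends of the path force the segment to be trivial. *)
Lemma im_along_injective : im_along h g gam 0 = im_along h g gam 1 -> c = 0.
Proof.
  intro Heq.
  destruct (MVT_gen (im_along h g gam) 0 1
    (fun s => c * fst ((h' (gam s) - g' (gam s)) / (h' (gam s) + g' (gam s)))%C))
    as [s [_ Hmvt]].
  - rewrite Rmin_left, Rmax_right by lra. exact im_along_derive.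
  - intros x _. apply im_along_continuous.
  - rewrite Heq in Hmvt.
    destruct (Hlu (gam s) (gam_in_E s)) as [Hh'0 Hom].
    destruct (dilatation_re_pos _ _ Hh'0 Hom) as [_ Hpos].
    assert (Hz : c * fst ((h' (gam s) - g' (gam s)) / (h' (gam s) + g' (gam s)))%C = 0) by lra.
    apply Rmult_integral in Hz. destruct Hz; [assumption|lra].
Qed.

End VerticalPath.

Lemma harm_vertical_path (z1 z2 : C) : cm z1 < 1 -> cm z2 < 1 ->
  fst (harm h g z1) = fst (harm h g z2) ->
  exists gam : R -> C, (forall s, cm (gam s) < 1) /\
    (forall s, F_alpha a (gam s) = (fst (F_alpha a z1),
        snd (F_alpha a z1) + clamp01 s * (snd (F_alpha a z2) - snd (F_alpha a z1)))) /\
    gam 0 = z1 /\ gam 1 = z2.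
Proof.
  intros Hz1 Hz2 Hf. apply vertical_path_exists; auto.
  rewrite <- !harm_fst_F; assumption.
Qed.

(* f is univalent: equal values force a vertical path with equal values of
   Im f at its ends, hence a trivial segment, hence equal F-values. *)
Lemma harm_univalent : univalent_E (harm h g).
Proof.
  intros z1 z2 Hz1 Hz2 Heq.
  destruct (harm_vertical_path z1 z2 Hz1 Hz2 (f_equal fst Heq)) as [gam [HgE [HgF [Hg0 Hg1]]]].
  assert (Hc := im_along_injective gam _ _ _ HgE HgF).
  apply (F_univalent a Ha); auto.
  apply injective_projections.
  - rewrite <- !harm_fst_F by assumption. apply (f_equal fst Heq).
  - symmetry. apply Rminus_diag_uniq, Hc. unfold im_along. rewrite Hg0, Hg1.
    assert (E2 := f_equal snd Heq). rewrite !harm_snd in E2. simpl. lra.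
Qed.

(* f(E) is convex in the imaginary direction: Im f takes every intermediate
   value along the vertical path, while Re f = Re F stays constant. *)
Lemma harm_image_convex : convex_imag_dir (image_E (harm h g)).
Proof.
  intros p q [z1 [Hz1 Hp]] [z2 [Hz2 Hq]] Hre t Ht. subst p q. unfold Re, Im in *.
  destruct (harm_vertical_path z1 z2 Hz1 Hz2 Hre) as [gam [HgE [HgF [Hg0 Hg1]]]].
  set (y := snd (harm h g z1) + t * (snd (harm h g z2) - snd (harm h g z1))).
  assert (Hy : Rmin (im_along h g gam 0) (im_along h g gam 1) <= y <=
               Rmax (im_along h g gam 0) (im_along h g gam 1)).
  { unfold im_along. rewrite Hg0, Hg1. unfold y. rewrite !harm_snd. simpl.
    unfold Rmin, Rmax. destruct Rle_dec; split; nra. }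
  destruct (IVT_gen _ 0 1 y (im_along_continuous gam _ _ _ HgE HgF) Hy) as [s [_ Hs]].
  exists (gam s). split; [apply HgE|].
  apply injective_projections; cbn [fst snd].
  - rewrite !harm_fst_F by auto. rewrite HgF. reflexivity.
  - rewrite harm_snd. unfold im_along in Hs. simpl in Hs. lra.
Qed.

End Shear.

Theorem mainTheorem1 (alpha : R) (Halpha : -1 <= alpha <= 1) :
  (forall z : Cx, E z -> exists l : Cx, has_cderiv (F_alpha alpha) z l /\
      0 < Re (Cmul (Csub Cx1 (Cmul z z)) l))
  /\ univalent_E (F_alpha alpha)
  /\ convex_imag_dir (image_E (F_alpha alpha))
  /\ (forall h g h' g' : Cx -> Cx,
        analytic_E_with_deriv h h' ->
        analytic_E_with_deriv g g' ->
        loc_univ_sense_pres h' g' ->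
        h Cx0 = Cx0 -> g Cx0 = Cx0 -> h' Cx0 = Cx1 -> g' Cx0 = Cx0 ->
        (forall z : Cx, E z -> Cadd (h z) (g z) = F_alpha alpha z) ->
        in_SH (harm h g) /\ convex_imag_dir (image_E (harm h g))).
Proof.
  split; [|split; [|split]].
  - intros z Hz. exists (Fd alpha z).
    split; [apply F_deriv; exact Hz|exact (F_deriv_re_pos alpha z Halpha Hz)].
  - intros z w Hz Hw. exact (F_univalent alpha Halpha z w Hz Hw).
  - intros p q Hp Hq. exact (F_image_convex alpha Halpha p q Hp Hq).
  - intros h g h' g' Hh Hg Hlu H0 G0 H'0 _ Hsum. split.
    + exists h, g, h', g'.
      split; [exact Hh|]. split; [exact Hg|]. split; [reflexivity|].
      split; [exact Hlu|]. split; [exact (harm_univalent alpha h g h' g' Halpha Hh Hg Hlu Hsum)|].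
      split; [|exact H'0].
      unfold harm. rewrite H0, G0. apply injective_projections; simpl; ring.
    + exact (harm_image_convex alpha h g h' g' Halpha Hh Hg Hsum).
Qed.
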